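(* Let $\mathcal F$ be any r-forest in $G$. Then there exists a $\hat G$-r-forest $\hat{\mathcal F}$ such that $\hat F(\hat{\mathcal F})\le F(\mathcal F)$ and $\hat{\mathcal F}$ has at most $2r-2$ non-terminal vertices.
   Context: Let $G=(V,E)$ be a connected undirected network with $n$ vertices and edge lengths $c_e>0$. Let $\mathcal R=\{\{v_1,u_1\},\dots,\{v_r,u_r\}\}$ be a set of $r\ge2$ relevant pairs (r-pairs) of vertices, with $r$ a fixed constant. The objective $\Phi$ is a non-decreasing function of the connection times $(t_{\{v_i,u_i\}})_{i=1}^r$, computable in $O(r)$ time from them. A terminal vertex is a vertex belonging to some r-pair. An r-forest is a subnetwork $\mathcal F$ of the network such that: (a) $\mathcal F$ is a forest; (b) every r-pair $\{v,u\}$ is joined by a (unique) path $P_{\mathcal F}(v,u)$ in $\mathcal F$; (c) every edge of $\mathcal F$ lies on $P_{\mathcal F}(v,u)$ for some r-pair $\{v,u\}$. For an r-forest $\mathcal F$, consider orderings $(e_1,\dots,e_f)$ of all edges of $\mathcal F$, built consecutively at unit speed from time $0$, so that $e_k$ is completed at time $\sum_{j\le k}c_{e_j}$. The connection time of an r-pair is the completion time of the last-built edge of its path in $\mathcal F$. $F(\mathcal F)$ denotes the minimum of $\Phi$ over all such orderings. This is the best objective value achievable when $\mathcal F$ is the set of edges built before all r-pairs are connected. $\hat G$ is the metric closure of $G$: the complete network on $V$ in which the length of edge $(u,v)$ equals the shortest-path distance between $u$ and $v$ in $G$. A $\hat G$-r-forest is an r-forest in $\hat G$ (for the same r-pairs).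 For a $\hat G$-r-forest $\hat{\mathcal F}$, $\hat F(\hat{\mathcal F})$ is defined as $F(\cdot)$ above but with $\hat G$-lengths. A non-terminal vertex of $\hat{\mathcal F}$ is a vertex of $\hat{\mathcal F}$ that is not a terminal vertex. *)

From HB Require Import structures.
From mathcomp Require Import all_boot all_order all_algebra.
From mathcomp Require Import boolp.
Set Implicit Arguments. Unset Strict Implicit. Unset Printing Implicit Defensive.
Import Order.TTheory GRing.Theory Num.Theory.
Local Open Scope ring_scope.

(* A (simple, undirected) network on the finite vertex type V is a set of
   edges E : {set {set V}}, each edge being a 2-element set {u,v}, together
   with an edge-length function c : {set V} -> R. *)

Section Defs.
Variables (V : finType) (R : realFieldType).

Definition adj (F : {set {set V}}) (x y : V) : bool := [set x; y] \in F.

(* p is a walk from x to y in F (x :: p is the vertex sequence) *)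
Definition walk (F : {set {set V}}) (x : V) (p : seq V) (y : V) : bool :=
  path (adj F) x p && (last x p == y).

Definition walk_len (c : {set V} -> R) (x : V) (p : seq V) : R :=
  \sum_(ab <- zip (x :: p) p) c [set ab.1; ab.2].

Definition walk_uses (e : {set V}) (x : V) (p : seq V) : bool :=
  has (fun ab : V * V => [set ab.1; ab.2] == e) (zip (x :: p) p).

Definition connected (E : {set {set V}}) : Prop :=
  forall x y : V, exists p, walk E x p y.

Definition is_sp_dist (E : {set {set V}}) (c : {set V} -> R) (x y : V) (d : R)
  : Prop :=
  (exists p, walk E x p y /\ walk_len c x p = d) /\
  (forall p, walk E x p y -> d <= walk_len c x p).

(* a cycle: at least 3 distinct vertices, consecutive ones adjacent, closed *)
Definition is_forest (F : {set {set V}}) : Prop :=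
  ~ exists (x : V) (p : seq V),
      [/\ uniq (x :: p), (2 <= size p)%N, path (adj F) x p & adj F (last x p) x].

Definition on_path (F : {set {set V}}) (v u : V) (e : {set V}) : Prop :=
  exists p, [/\ walk F v p u, uniq (v :: p) & walk_uses e v p].

Definition r_forest (E : {set {set V}}) (r : nat) (pairs : 'I_r -> V * V)
  (F : {set {set V}}) : Prop :=
  [/\ F \subset E,
      is_forest F,
      (forall i, exists p, walk F (pairs i).1 p (pairs i).2) &
      (forall e, e \in F -> exists i, on_path F (pairs i).1 (pairs i).2 e)].

Definition completion (c : {set V} -> R) (s : seq {set V}) (e : {set V}) : R :=
  \sum_(e' <- take (index e s).+1 s) c e'.

Definition conn_time (F : {set {set V}}) (c : {set V} -> R)
  (s : seq {set V}) (v u : V) : R :=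
  \big[Num.max/0]_(e <- s | `[< on_path F v u e >]) completion c s e.

Definition obj (r : nat) (pairs : 'I_r -> V * V) (Phi : ('I_r -> R) -> R)
  (F : {set {set V}}) (c : {set V} -> R) : R :=
  let val s := Phi (fun i => conn_time F c s (pairs i).1 (pairs i).2) in
  foldr (fun s acc => Num.min (val s) acc) (val (enum F))
        (permutations (enum F)).

Definition terminals (r : nat) (pairs : 'I_r -> V * V) : {set V} :=
  [set x | [exists i, (x == (pairs i).1) || (x == (pairs i).2)]].

Definition forest_vertices (F : {set {set V}}) : {set V} :=
  \bigcup_(e in F) e.

Definition nonterminals (r : nat) (pairs : 'I_r -> V * V)
  (F : {set {set V}}) : {set V} :=
  forest_vertices F :\: terminals pairs.

(* edge set of the metric closure: all pairs of distinct vertices *)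
Definition complete_edges : {set {set V}} := [set e : {set V} | #|e| == 2].

End Defs.

From HB Require Import structures.
From mathcomp Require Import all_boot all_order all_algebra zify boolp.
Import Order.TTheory GRing.Theory Num.Theory.
Set Implicit Arguments. Unset Strict Implicit. Unset Printing Implicit Defensive.

(* Metric-closure lengths are at most the original lengths, so F itself, read
   in the metric closure, is no worse.  In an r-forest every nonterminal
   vertex is interior to a pair path, hence has degree >= 2.  A nonterminal w
   of degree 2 with neighbours a, b is shortcut: replace wa and wb by ab.  In
   an optimal building order, building ab in place of the later of wa, wb and
   dropping the other connects every pair no later, by the triangle
   inequality; and the forest loses an edge.  When no such vertex is left,
   terminals have degree >= 1 and nonterminals degree >= 3, so the handshake
   identity and #edges < #vertices give
   #nonterminals <= #terminals - 2 <= 2r - 2. *)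

Section Forests.
Variable V : finType.
Implicit Types (G : {set {set V}}) (e : {set V}) (x y z v w : V) (p : seq V).

Definition simple_graph G := forall e, e \in G -> #|e| = 2.

Definition deg G v := #|[set e in G | v \in e]|.

Lemma adjC G x y : adj G x y = adj G y x.
Proof. by rewrite /adj setUC. Qed.

Lemma adj_neq G x y : simple_graph G -> adj G x y -> x != y.
Proof.
move=> HG Gxy; apply/eqP=> exy; subst y.
by have := HG _ Gxy; rewrite setUid cards1.
Qed.

Lemma simple_edgeP G e v : simple_graph G -> e \in G -> v \in e ->
  exists2 z, z != v & e = [set v; z].
Proof.
move=> HG Ge ve; have /eqP/cards2P [x [y [nxy exy]]] := HG _ Ge.
subst e; move: ve; rewrite in_set2 => /orP [] /eqP ->.
  by exists y; rewrite // eq_sym.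
by exists x; rewrite // setUC.
Qed.

Lemma walk_uses_cons e x y p :
  walk_uses e x (y :: p) = ([set x; y] == e) || walk_uses e y p.
Proof. by []. Qed.

Lemma mem_walk_uses e x p v : walk_uses e x p -> v \in e -> v \in x :: p.
Proof.
elim: p x => [|y p IH] x //; rewrite walk_uses_cons => /orP [/eqP <-|].
  by rewrite in_set2 !inE => /orP [] ->; rewrite ?orbT.
by move=> /IH H /H vp; rewrite inE vp orbT.
Qed.

Lemma is_forestS G1 G2 : G1 \subset G2 -> is_forest G2 -> is_forest G1.
Proof.
move=> /subsetP S12 HF [x [p [U Sz P A]]]; apply: HF; exists x, p; split => //.
- by apply: sub_path P => u v; apply: S12.
- exact: S12.
Qed.

Lemma interior_neighbours G x p v : path (adj G) x p -> uniq (x :: p) ->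
  v \in p -> v != last x p -> exists y z, [/\ y != z, adj G y v & adj G v z].
Proof.
move=> + + vp; case/splitPr: vp => p1 [|z p2] P U; first by rewrite last_cat /= eqxx.
move=> _; exists (last x p1), z.
move: P; rewrite cat_path /= => /and3P [_ A1 /andP [A2 _]]; split => //.
apply/eqP => Ez; move: U; rewrite -cat_cons cat_uniq => /and3P [_ + _].
by rewrite /= -Ez mem_last !orbT.
Qed.

Lemma forest_verticesP G v :
  reflect (exists2 e, e \in G & v \in e) (v \in forest_vertices G).
Proof. exact: bigcupP. Qed.

Lemma deg_gt0 G v : v \in forest_vertices G -> 0 < deg G v.
Proof.
move/forest_verticesP => [e Ge ve]; rewrite /deg card_gt0; apply/set0Pn.
by exists e; rewrite inE Ge ve.
Qed.

Lemma adj_forest_vertices G x y : adj G x y -> y \in forest_vertices G.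
Proof. by move=> A; apply/forest_verticesP; exists [set x; y]; rewrite ?set22. Qed.

Lemma other_neighbour G v z0 : simple_graph G -> 1 < deg G v ->
  exists2 z, adj G v z & z != z0.
Proof.
move=> HG /card_gt1P [e1 [e2 [+ + ne12]]]; rewrite !inE => /andP [G1 v1] /andP [G2 v2].
have [z1 nz1 E1] := simple_edgeP HG G1 v1.
have [z2 nz2 E2] := simple_edgeP HG G2 v2.
have nz12 : z1 != z2 by apply: contraNneq ne12 => ez; rewrite E1 E2 ez.
case: (eqVneq z1 z0) => [<-|nz10]; last by exists z1; rewrite // /adj -E1.
by exists z2; rewrite 1?eq_sym // /adj -E2.
Qed.

(* The neighbour of the head other than the next vertex cannot lie on the
   path, for it would close a cycle. *)
Lemma forest_path_ext G y p : is_forest G -> simple_graph G ->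
  path (adj G) y p -> uniq (y :: p) -> 1 < deg G y ->
  exists2 z, adj G z y & z \notin y :: p.
Proof.
move=> HF HG P U /(other_neighbour (head y p) HG) [z Ayz nz].
exists z; first by rewrite adjC.
have zy : z != y by rewrite eq_sym (adj_neq HG Ayz).
rewrite inE (negbTE zy) /=; apply/negP => zp; apply: HF.
move: P U nz; case/splitPr: zp => p1 p2 P U nz.
exists y, (rcons p1 z); split.
- apply: subseq_uniq U; rewrite -cats1 /= eqxx.
  by apply: cat_subseq; rewrite ?sub1seq ?mem_head.
- by case: p1 {P U} nz => [|t p1] /=; rewrite ?eqxx // size_rcons.
- by move: P; rewrite cat_path rcons_path /= => /and3P [-> ->].
- by rewrite last_rcons adjC.
Qed.

Lemma forest_leaf G x : is_forest G -> simple_graph G ->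
  x \in forest_vertices G -> exists2 w, w \in forest_vertices G & deg G w = 1.
Proof.
move=> HF HG Gx.
have [/exists_inP [w Gw /eqP] |/exists_inPn no_leaf] :=
  boolP [exists w in forest_vertices G, deg G w == 1]; first by exists w.
have deg_gt1 w : w \in forest_vertices G -> 1 < deg G w.
  by move=> Gw; have := deg_gt0 Gw; have := no_leaf w Gw; lia.
suff long k : exists y p,
    [/\ path (adj G) y p, uniq (y :: p), y \in forest_vertices G & k <= size p].
  have [y [p [_ U _]]] := long #|V|.
  by have := max_card (mem (y :: p)); rewrite (card_uniqP U) /= ltnNge => /negP.
elim: k => [|k [y [p [P U Gy Sz]]]]; first by exists x, [::].
have [z Azy zyp] := forest_path_ext HF HG P U (deg_gt1 y Gy).
exists z, (y :: p); split => //=; rewrite ?Azy ?zyp //.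
by apply: (@adj_forest_vertices _ y); rewrite adjC.
Qed.

(* Thanks to the truncated [.-1], this also holds for the empty forest. *)
Lemma card_forest_edges G : is_forest G -> simple_graph G ->
  #|G| <= (#|forest_vertices G|).-1.
Proof.
move Hn : #|G| => n; elim: n G Hn => [//|n IH] G Hn HF HG.
have [e0 Ge0] : exists e0, e0 \in G by apply/set0Pn; rewrite -card_gt0 Hn.
have [v ve0] : exists v, v \in e0 by apply/set0Pn; rewrite -card_gt0 (HG _ Ge0).
have Gv : v \in forest_vertices G by apply/forest_verticesP; exists e0.
have [w Gw /eqP/cards1P [e De]] := forest_leaf HF HG Gv.
have : e \in [set e in G | w \in e] by rewrite De set11.
rewrite inE => /andP [Ge we].
have HF' : is_forest (G :\ e) by apply: is_forestS HF; apply: subsetDl.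
have HG' : simple_graph (G :\ e) by move=> f; rewrite inE => /andP [_ /HG].
have card_Ge : #|G :\ e| = n by move: Hn; rewrite (cardsD1 e G) Ge add1n => -[].
have := IH _ card_Ge HF' HG'.
have /subset_leq_card : forest_vertices (G :\ e) \subset forest_vertices G :\ w.
  apply/subsetP => u /forest_verticesP [f]; rewrite !inE => /andP [nfe Gf] uf.
  apply/andP; split; last by apply/forest_verticesP; exists f.
  apply: contraNneq nfe => euw; subst u.
  have : f \in [set e in G | w \in e] by rewrite inE Gf uf.
  by rewrite De inE.
have /subset_leq_card : e \subset forest_vertices G.
  by apply/subsetP => u ue; apply/forest_verticesP; exists e.
rewrite (HG _ Ge) (cardsD1 w (forest_vertices G)) Gw.
lia.
Qed.

Lemma sum_deg G : simple_graph G ->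
  \sum_(v in forest_vertices G) deg G v = 2 * #|G|.
Proof.
move=> HG; transitivity (\sum_(v in forest_vertices G) \sum_(e in G | v \in e) 1).
  by apply: eq_bigr => v _; rewrite /deg -sum1_card; apply: eq_bigl => e; rewrite inE.
rewrite (exchange_big_dep (mem G)) /=; last by move=> ? ? _ /andP [].
rewrite mulnC -sum_nat_const; apply: eq_bigr => e Ge.
rewrite -[2](HG _ Ge) -sum1_card; apply: eq_bigl => v.
rewrite Ge /= andb_idl // => ve.
by apply/forest_verticesP; exists e.
Qed.

Lemma deg2_neighbours G w : simple_graph G -> deg G w = 2 ->
  exists a b, [/\ a != b, [set w; a] \in G, [set w; b] \in G &
    forall e, e \in G -> w \in e -> e = [set w; a] \/ e = [set w; b]].
Proof.
move=> HG /eqP/cards2P [e1 [e2 [ne12 E12]]].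
have : e1 \in [set e in G | w \in e] by rewrite E12 set21.
have : e2 \in [set e in G | w \in e] by rewrite E12 set22.
rewrite !inE => /andP [G2 w2] /andP [G1 w1].
have [a _ Ea] := simple_edgeP HG G1 w1.
have [b _ Eb] := simple_edgeP HG G2 w2.
subst e1 e2; exists a, b; split => //; first by apply: contraNneq ne12 => ->.
move=> e Ge we; have : e \in [set e in G | w \in e] by rewrite inE Ge we.
by rewrite E12 in_set2 => /orP [] /eqP ->; [left | right].
Qed.

Section Terminals.
Variables (r : nat) (pairs : 'I_r -> V * V).

Lemma notin_terminals v : v \notin terminals pairs ->
  forall i, v != (pairs i).1 /\ v != (pairs i).2.
Proof. by move=> + i; rewrite inE => /existsPn /(_ i); rewrite negb_or => /andP. Qed.

Lemma card_terminals : #|terminals pairs| <= 2 * r.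
Proof.
have sub : terminals pairs \subset
    [set (pairs i).1 | i : 'I_r] :|: [set (pairs i).2 | i : 'I_r].
  apply/subsetP => v; rewrite inE => /existsP [i /orP [] /eqP ->].
    by rewrite inE; apply/orP; left; apply/imsetP; exists i.
  by rewrite inE; apply/orP; right; apply/imsetP; exists i.
apply: leq_trans (subset_leq_card sub) _; apply: leq_trans (leq_card_setU _ _) _.
rewrite mul2n -addnn; apply: leq_add; rewrite -[X in _ <= X](card_ord r); exact: leq_imset_card.
Qed.

Lemma complete_edges_simple G : G \subset complete_edges V -> simple_graph G.
Proof. by move=> /subsetP S e /S; rewrite inE => /eqP. Qed.

Lemma nonterminal_deg_gt1 G v : r_forest (complete_edges V) pairs G ->
  v \in nonterminals pairs G -> 1 < deg G v.
Proof.
move=> [HS _ _ Hon] ; have HG := complete_edges_simple HS.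
rewrite inE => /andP [vT /forest_verticesP [e Ge ve]].
have [i [p [/andP [P /eqP L] U W]]] := Hon e Ge.
have [n1 n2] := notin_terminals vT i.
have := mem_walk_uses W ve; rewrite inE (negbTE n1) /= => vp.
have [y [z [nyz A1 A2]]] := interior_neighbours P U vp (ltac:(by rewrite L)).
apply/card_gt1P; exists [set y; v], [set v; z]; split.
- by rewrite inE set22 andbT.
- by rewrite inE set21 andbT.
apply/eqP => Eyz.
have : y \in [set v; z] by rewrite -Eyz set21.
rewrite in_set2 (negbTE nyz) orbF => /eqP eyv.
by move: (adj_neq HG A1); rewrite eyv eqxx.
Qed.

Lemma card_nonterminals G : r_forest (complete_edges V) pairs G ->
  (forall v, v \in nonterminals pairs G -> deg G v != 2) ->
  #|nonterminals pairs G| <= 2 * r - 2.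
Proof.
move=> HR no_deg2; have [HS HF _ _] := HR; have HG := complete_edges_simple HS.
have degN : 3 * #|nonterminals pairs G| <= \sum_(v in nonterminals pairs G) deg G v.
  rewrite mulnC -sum_nat_const; apply: leq_sum => v Nv.
  by have := nonterminal_deg_gt1 HR Nv; have := no_deg2 v Nv; lia.
rewrite /nonterminals in degN *.
set T := forest_vertices G :&: terminals pairs.
have degT : #|T| <= \sum_(v in T) deg G v.
  rewrite -sum1_card; apply: leq_sum => v; rewrite inE => /andP [Gv _].
  exact: deg_gt0.
have cardT : #|T| <= 2 * r := leq_trans (subset_leq_card (subsetIr _ _)) card_terminals.
have := card_forest_edges HF HG; have := sum_deg HG.
rewrite (big_setID (terminals pairs)) /= -/T -(cardsID (terminals pairs) (forest_vertices G)) -/T.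
lia.
Qed.

End Terminals.
End Forests.

Lemma perm_cat_cons2 (T : eqType) (s1 s2 s3 : seq T) x y :
  perm_eq (s1 ++ x :: s2 ++ y :: s3) (x :: y :: s1 ++ s2 ++ s3).
Proof.
apply/permP => q; rewrite /= !count_cat /= ?count_cat /=.
by case: (q x) (q y) => [] []; move: (count q s1) (count q s2) (count q s3); lia.
Qed.

Lemma perm_cat_cons (T : eqType) (s1 s2 s3 : seq T) z :
  perm_eq (s1 ++ s2 ++ z :: s3) (z :: s1 ++ s2 ++ s3).
Proof.
apply/permP => q; rewrite /= !count_cat /= ?count_cat /=.
by case: (q z); move: (count q s1) (count q s2) (count q s3); lia.
Qed.

Lemma uniq_cat_cons2 (T : eqType) (s1 s2 s3 : seq T) x y :
  uniq (s1 ++ x :: s2 ++ y :: s3) =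
  [&& x != y, x \notin s1 ++ s2 ++ s3, y \notin s1 ++ s2 ++ s3 & uniq (s1 ++ s2 ++ s3)].
Proof. by rewrite (perm_uniq (perm_cat_cons2 _ _ _ _ _)) !cons_uniq in_cons negb_or -andbA. Qed.

Section Objective.
Variables (V : finType) (R : realFieldType).
Local Open Scope ring_scope.
Implicit Types (G : {set {set V}}) (c : {set V} -> R) (s t : seq {set V})
  (e x y z : {set V}).

Lemma completion_catl c s t e :
  e \in s -> completion c (s ++ t) e = completion c s e.
Proof. by move=> es; rewrite /completion index_cat es takel_cat // index_mem. Qed.

Lemma completion_catr c s t e : e \notin s ->
  completion c (s ++ t) e = \sum_(x <- s) c x + completion c t e.
Proof.
move=> es; rewrite /completion index_cat (negbTE es) take_cat.
by rewrite ltnNge -addnS leq_addr big_cat addKn.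
Qed.

Lemma completion_head c x t : completion c (x :: t) x = c x.
Proof. by rewrite /completion /= eqxx take0 big_seq1. Qed.

Lemma completion_cons c x t e :
  e != x -> completion c (x :: t) e = c x + completion c t e.
Proof. by move=> ex; rewrite -cat1s completion_catr ?big_seq1 // inE. Qed.

Lemma completion_le c c' s e : {in s, forall x, c x <= c' x} ->
  completion c s e <= completion c' s e.
Proof.
move=> le_cc'; rewrite /completion big_seq [leRHS]big_seq.
by apply: ler_sum => x /mem_take; apply: le_cc'.
Qed.

Section ShortcutOrder.
Variables (c : {set V} -> R) (s1 s2 s3 : seq {set V}) (x y z : {set V}).
Hypotheses (U : uniq (s1 ++ x :: s2 ++ y :: s3))
  (z_new : z \notin s1 ++ x :: s2 ++ y :: s3)
  (cx_ge0 : 0 <= c x) (cz_le : c z <= c x + c y).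

Let new := s1 ++ s2 ++ z :: s3.
Let old := s1 ++ x :: s2 ++ y :: s3.

Lemma completion_shortcut_new : completion c new z <= completion c old y.
Proof.
have := U; rewrite uniq_cat_cons2 !mem_cat !negb_or => /and4P [nxy _ /and3P [ny1 ny2 _] _].
move: z_new; rewrite !(mem_cat, inE) !negb_or => /and5P [nz1 _ nz2 _ _].
rewrite /new /old !completion_catr // completion_head.
rewrite completion_cons 1?eq_sym // completion_catr // completion_head.
by rewrite lerD2l addrCA lerD2l.
Qed.

Lemma completion_shortcut_old e : e \in new -> e != z ->
  completion c new e <= completion c old e.
Proof.
move=> e_new ez; have := U; rewrite uniq_cat_cons2 !mem_cat !negb_or.
case/and4P => _ /and3P [nx1 nx2 nx3] /and3P [_ ny2 ny3] _.
have [e1|e1] := boolP (e \in s1); first by rewrite !completion_catl.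
rewrite /new /old !(completion_catr _ _ e1) lerD2l.
have [e2|e2] := boolP (e \in s2).
  have ex : e != x by apply: contraNneq nx2 => <-.
  by rewrite completion_cons // !completion_catl // lerDr.
have e3 : e \in s3.
  by move: e_new; rewrite !(mem_cat, inE) (negbTE e1) (negbTE e2) (negbTE ez).
have ex : e != x by apply: contraNneq nx3 => <-.
have ey : e != y by apply: contraNneq ny3 => <-.
rewrite completion_cons // !completion_catr // !completion_cons //.
by rewrite [leRHS]addrCA lerD2l addrA lerD2r.
Qed.

End ShortcutOrder.

Section Cost.
Variables (r : nat) (pairs : 'I_r -> V * V) (Phi : ('I_r -> R) -> R).
Hypothesis Phi_mono : forall t t' : 'I_r -> R, (forall i, t i <= t' i) -> Phi t <= Phi t'.

Definition order_cost G c s := Phi (fun i => conn_time G c s (pairs i).1 (pairs i).2).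

Lemma objE G c : obj pairs Phi G c =
  \big[Num.min/order_cost G c (enum G)]_(s <- permutations (enum G)) order_cost G c s.
Proof. by rewrite unlock. Qed.

Lemma obj_le G c s : perm_eq s (enum G) -> obj pairs Phi G c <= order_cost G c s.
Proof. by move=> Ps; rewrite objE ge_bigmin_seq // mem_permutations. Qed.

Lemma obj_attained G c :
  exists2 s, perm_eq s (enum G) & obj pairs Phi G c = order_cost G c s.
Proof.
rewrite objE big_seq; elim/big_ind: _.
- by exists (enum G).
- move=> _ _ [s Ps ->] [t Pt ->]; rewrite /Order.min.
  by case: ifP => _; [exists s | exists t].
- by move=> s; rewrite mem_permutations; exists s.
Qed.

Lemma conn_time_le G c c' s v u : {in s, forall x, c x <= c' x} ->
  conn_time G c s v u <= conn_time G c' s v u.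
Proof.
move=> le_cc'; rewrite /conn_time big_seq_cond.
apply: bigmax_le => [|e /andP [es Pe]]; first exact: bigmax_ge_id.
by apply: le_trans (completion_le e le_cc') _; apply: le_bigmax_seq.
Qed.

Lemma obj_le_lengths G c c' : {in G, forall e, c e <= c' e} ->
  obj pairs Phi G c <= obj pairs Phi G c'.
Proof.
move=> le_cc'; have [s Ps ->] := obj_attained G c'.
apply: le_trans (obj_le c Ps) _; apply: Phi_mono => i; apply: conn_time_le => e.
by rewrite (perm_mem Ps) mem_enum; apply: le_cc'.
Qed.

End Cost.
End Objective.

Lemma last_id_nil (T : eqType) (x : T) p : x \notin p -> last x p = x -> p = [::].
Proof. by case: p => [//|t p] /= + E; have := mem_last t p; rewrite E => ->. Qed.

Lemma split_two (T : eqType) (s : seq T) x y : x \in s -> y \in s -> x != y ->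
  exists s1 s2 s3, s = s1 ++ x :: s2 ++ y :: s3 \/ s = s1 ++ y :: s2 ++ x :: s3.
Proof.
move=> xs + nxy; case/splitPr: xs => s1 t.
rewrite mem_cat inE (eq_sym y) (negbTE nxy) /= => /orP [|] /splitPr [t1 t2].
  by exists t1, t2, t; right; rewrite -catA.
by exists s1, t1, t2; left.
Qed.

Section Shortcut.
Variables (V : finType) (G : {set {set V}}) (w a b : V).
Hypotheses (HG : simple_graph G) (nab : a != b) (nwa : w != a) (nwb : w != b)
  (Gwa : [set w; a] \in G) (Gwb : [set w; b] \in G)
  (deg_w : forall e, e \in G -> w \in e -> e = [set w; a] \/ e = [set w; b]).
Implicit Types (e : {set V}) (x y z v u : V) (p : seq V).

Definition shortcut := [set a; b] |: (G :\ [set w; a] :\ [set w; b]).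

Lemma adj_w x : adj G x w -> (x == a) || (x == b).
Proof.
move=> A; have nxw := adj_neq HG A.
have xw : x \in [set x; w] by rewrite set21.
case: (deg_w A (set22 _ _)) => E; move: xw;
by rewrite E in_set2 (negbTE nxw) /= => /eqP ->; rewrite eqxx ?orbT.
Qed.

Lemma adj_ab_w x : (x == a) || (x == b) -> adj G x w /\ adj G w x.
Proof. by case/orP => /eqP ->; rewrite /adj setUC; split => //; rewrite setUC. Qed.

Lemma set2_ab x z : (x == a) || (x == b) -> (z == a) || (z == b) -> x != z ->
  [set x; z] = [set a; b].
Proof. by case/orP => /eqP -> /orP [] /eqP ->; rewrite ?eqxx // setUC. Qed.

Lemma set2_ab_ends x z : [set x; z] = [set a; b] ->
  ((x == a) || (x == b)) && ((z == a) || (z == b)).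
Proof. by move=> E; rewrite -!in_set2 -E set21 set22. Qed.

Lemma set2_ab_neq x z : [set x; z] = [set a; b] -> x != z.
Proof.
by move=> E; apply/eqP => exz; move: (cards2 a b); rewrite nab -E exz setUid cards1.
Qed.

Lemma notin_shortcut_w e : e \in shortcut -> w \notin e.
Proof.
rewrite !inE => /orP [/eqP ->|/and3P [nwb' nwa' Ge]]; first by rewrite in_set2 negb_or nwa nwb.
by apply/negP => /(deg_w Ge) [] E; rewrite E eqxx in nwa' nwb'.
Qed.

Lemma shortcut_old e : e \in shortcut -> e != [set a; b] -> e \in G.
Proof. by rewrite !inE => /orP [->//|/and3P [_ _ ->]]. Qed.

Lemma adj_shortcut x y : adj G x y -> x != w -> y != w -> adj shortcut x y.
Proof.
rewrite /adj => A nxw nyw; rewrite !inE A andbT; apply/orP; right.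
apply/andP; split; [apply: contraTneq (set21 w b) | apply: contraTneq (set21 w a)];
by move=> <-; rewrite in_set2 !(eq_sym w) negb_or nxw nyw.
Qed.

Lemma shortcut_path_notw x p : path (adj shortcut) x p -> w \notin p.
Proof.
elim: p x => [|y p IH] x //= /andP [A P]; rewrite inE negb_or (IH _ P) andbT.
by apply: contraTneq (notin_shortcut_w A) => <-; rewrite set22.
Qed.

(* As w has degree 2, deleting it from a path of G replaces the detour a-w-b
   by the edge ab. *)
Lemma shortcut_filter_path x p : path (adj G) x p -> uniq (x :: p) ->
  x != w -> last x p != w ->
  [/\ path (adj shortcut) x (filter (predC1 w) p),
      last x (filter (predC1 w) p) = last x p,
      (forall e, w \notin e -> walk_uses e x p -> walk_uses e x (filter (predC1 w) p)) &
      (w \in p -> walk_uses [set a; b] x (filter (predC1 w) p))].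
Proof.
have [n] := ubnP (size p); elim: n x p => // n IH x [|y p] //= /ltnSE Sz P U nxw L.
case: (eqVneq y w) => [eyw|nyw]; last first.
  move: U P; rewrite /= inE negb_or => /andP [/andP [_ _] U] /andP [A P].
  have [P' L' W1 W2] := IH y p Sz P U nyw L.
  split => //; first by rewrite P' andbT adj_shortcut.
  - by move=> e we; rewrite !walk_uses_cons => /orP [->//|W]; rewrite W1 // orbT.
  - by rewrite inE eq_sym (negbTE nyw) => /W2 W; rewrite walk_uses_cons W orbT.
subst y; case: p Sz P U L => [|z p] Sz P U L; first by rewrite eqxx in L.
move: P U => /= /and3P [A1 A2 P]; rewrite !inE !negb_or.
case/andP => /and3P [_ nxz _] /andP [/andP [nwz _] U].
have [P' L' W1 W2] := IH z p (ltnW Sz) P U (ltac:(by rewrite eq_sym)) L.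
have Eab : [set x; z] = [set a; b].
  by apply: set2_ab => //; apply: adj_w; rewrite // adjC.
rewrite /= eqxx /= (ltac:(by rewrite eq_sym) : z != w) /=.
split => //.
- by rewrite P' andbT /adj Eab setU11.
- move=> e we; rewrite !walk_uses_cons => /or3P [/eqP E|/eqP E|W].
  + by move: we; rewrite -E set22.
  + by move: we; rewrite -E set21.
  + by rewrite W1 // orbT.
- by rewrite walk_uses_cons Eab eqxx.
Qed.

Fixpoint detour x p := if p is y :: q then
  (if [set x; y] == [set a; b] then w :: y :: detour y q else y :: detour y q)
  else [::].

Lemma detour_id x p : a \notin p -> b \notin p -> detour x p = p.
Proof.
elim: p x => [|y p IH] x //=; rewrite !inE !negb_or => /andP [nay nap] /andP [nby nbp].
rewrite IH //; case: ifP => // /eqP /set2_ab_ends.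
by rewrite !(eq_sym y) (negbTE nay) (negbTE nby) andbF.
Qed.

Lemma mem_detour x p z : z \in detour x p -> (z == w) || (z \in p).
Proof.
elim: p x => [|y p IH] x //=; case: ifP => _; rewrite !inE.
  by case/or3P => [->|->|/IH /orP [] ->]; rewrite ?orbT.
by case/orP => [->|/IH /orP [] ->]; rewrite ?orbT.
Qed.

Lemma last_detour x p : last x (detour x p) = last x p.
Proof. by elim: p x => [|y p IH] x //=; case: ifP => _ /=; rewrite IH. Qed.

Lemma size_detour x p : size p <= size (detour x p).
Proof.
by elim: p x => [|y p IH] x //=; case: ifP => _ /=; rewrite ltnS ?IH // ltnW ?ltnS.
Qed.

Lemma detour_path x p : path (adj shortcut) x p -> path (adj G) x (detour x p).
Proof.
elim: p x => [|y p IH] x //= /andP [A P]; case: ifP => [/eqP /set2_ab_ends /andP [xab yab]|nE].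
  by rewrite /= (adj_ab_w xab).1 (adj_ab_w yab).2 IH.
by rewrite /= IH // andbT; apply: shortcut_old; rewrite ?nE.
Qed.

Lemma detour_uniq x p : w \notin x :: p -> uniq (x :: p) -> uniq (x :: detour x p).
Proof.
elim: p x => [|y p IH] x //=; rewrite !inE !negb_or => /and3P [nwx nwy nwp].
case/andP => /andP [nxy nxp] /andP [nyp U].
case: ifP => [/eqP E|nE].
  have /andP [] := set2_ab_ends E; do 2!case/orP => /eqP ?; subst;
    rewrite ?eqxx // in nxy;
    by rewrite detour_id //= !inE !negb_or eq_sym nwx nxy nxp nwy nwp nyp U.
rewrite /= inE negb_or nxy /=.
have -> : x \notin detour y p.
  by apply/negP => /mem_detour /orP [/eqP exw|]; [rewrite exw eqxx in nwx | rewrite (negbTE nxp)].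
by have := IH y; rewrite /= !inE negb_or nwy nwp nyp U /=; apply.
Qed.

Lemma detour_uses e x p : walk_uses e x p -> e != [set a; b] ->
  walk_uses e x (detour x p).
Proof.
elim: p x => [|y p IH] x //=; rewrite walk_uses_cons => W ne.
case: ifP => [/eqP E|nE]; rewrite !walk_uses_cons.
  by case/orP: W => [/eqP E'|W]; [rewrite -E' E eqxx in ne | rewrite IH // !orbT].
by case/orP: W => [->//|W]; rewrite IH // orbT.
Qed.

Lemma detour_uses_ab x p : walk_uses [set a; b] x p ->
  walk_uses [set w; a] x (detour x p) && walk_uses [set w; b] x (detour x p).
Proof.
elim: p x => [|y p IH] x //=; rewrite walk_uses_cons => W.
case: ifP => [/eqP E|nE]; rewrite !walk_uses_cons; last first.
  by case/orP: W => [/eqP E|/IH /andP [-> ->]]; rewrite ?E ?eqxx ?orbT // in nE *.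
have nxy := set2_ab_neq E; have /andP [] := set2_ab_ends E.
do 2!case/orP => /eqP ?; subst; rewrite ?eqxx // in nxy *;
by rewrite setUC eqxx ?orbT.
Qed.

Lemma neq_wa_wb : [set w; a] != [set w; b].
Proof.
apply/eqP => E; have : a \in [set w; b] by rewrite -E set22.
by rewrite in_set2 eq_sym (negbTE nwa) (negbTE nab).
Qed.

Lemma card_shortcut : #|shortcut| < #|G|.
Proof.
rewrite /shortcut cardsU1 (cardsD1 [set w; a] G) Gwa (cardsD1 [set w; b] (G :\ _)).
have -> : [set w; b] \in G :\ [set w; a] by rewrite !inE eq_sym neq_wa_wb Gwb.
move: (#|_ :\ _|) => n.
by case: (_ \notin _); rewrite /= !add1n ?add0n ltnS ?leqnSn.
Qed.

Lemma ab_notin_G : is_forest G -> [set a; b] \notin G.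
Proof.
move=> HF; apply/negP => Gab; apply: HF; exists w, [:: a; b]; split => //.
- by rewrite /= !inE negb_or nwa nwb nab.
- by rewrite /= /adj Gwa Gab.
- by rewrite /= /adj setUC.
Qed.

(* A cycle of the shortcut closed by ab becomes a cycle of G through w. *)
Lemma shortcut_cycle_closing_ab x p : is_forest G ->
  uniq (x :: p) -> 2 <= size p -> path (adj shortcut) x p ->
  [set last x p; x] = [set a; b] -> False.
Proof.
move=> HF U Sz P Eab.
have nwp := shortcut_path_notw P.
have /andP [Hl Hx] := set2_ab_ends Eab.
have Ha : (a == last x p) || (a == x) by rewrite -in_set2 Eab set21.
have Hb : (b == last x p) || (b == x) by rewrite -in_set2 Eab set22.
clear Eab; move: U Sz P Hl nwp Ha Hb; case/lastP: p => [|p0 l] //.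
rewrite last_rcons => U Sz P Hl nwp Ha Hb.
move: U; rewrite /= rcons_uniq mem_rcons inE negb_or.
case/andP => /andP [nxl nxp0] /andP [nlp0 U0].
have [nap nbp] : (a \notin p0) /\ (b \notin p0).
  by split; [case/orP: Ha | case/orP: Hb] => /eqP ->.
move: P; rewrite rcons_path => /andP [P0 Al].
have PG0 : path (adj G) x p0 by rewrite -(detour_id x nap nbp); apply: detour_path.
have AG : adj G (last x p0) l.
  apply: shortcut_old => //; apply/eqP => /set2_ab_ends /andP [Hm _].
  have : (last x p0 == l) || (last x p0 == x).
    by case/orP: Hm => /eqP ->; rewrite ?Ha ?Hb ?(eq_sym l) ?(eq_sym x).
  case/orP => /eqP Em.
    by have := mem_last x p0; rewrite Em inE (negbTE nlp0) eq_sym (negbTE nxl).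
  by move: Sz; rewrite (last_id_nil nxp0 Em).
have nwx : w != x.
  by apply: contraTneq (adj_ab_w Hx).1 => <-; apply/negP => /(adj_neq HG); rewrite eqxx.
apply: HF; exists x, (rcons (rcons p0 l) w); split.
- rewrite -rcons_cons rcons_uniq /= rcons_uniq mem_rcons inE negb_or nxl nxp0 nlp0 U0.
  by rewrite in_cons negb_or nwx nwp.
- by rewrite !size_rcons.
- by rewrite !rcons_path PG0 AG /= last_rcons; apply: (adj_ab_w Hl).1.
- by rewrite last_rcons; apply: (adj_ab_w Hx).2.
Qed.

Lemma shortcut_forest : is_forest G -> is_forest shortcut.
Proof.
move=> HF [x [p [U Sz P A]]].
case: (eqVneq [set last x p; x] [set a; b]) => [Eab|nEab].
  exact: shortcut_cycle_closing_ab HF U Sz P Eab.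
have nwx : w != x by apply: contraTneq (notin_shortcut_w A) => ->; rewrite set22.
have nwxp : w \notin x :: p by rewrite inE negb_or nwx (shortcut_path_notw P).
apply: HF; exists x, (detour x p); split.
- exact: detour_uniq.
- exact: leq_trans Sz (size_detour x p).
- exact: detour_path.
- by rewrite last_detour; apply: shortcut_old.
Qed.

Lemma on_path_shortcut v u e : v != w -> on_path shortcut v u e ->
  (e != [set a; b] -> on_path G v u e) /\
  (e = [set a; b] -> on_path G v u [set w; a] /\ on_path G v u [set w; b]).
Proof.
move=> nv [p [/andP [P /eqP L] U W]].
have nwp : w \notin v :: p by rewrite inE negb_or eq_sym nv (shortcut_path_notw P).
have Wk : walk G v (detour v p) u by rewrite /walk detour_path // last_detour L eqxx.
have U' := detour_uniq nwp U.
split => [ne|Ee]; first by exists (detour v p); split => //; apply: detour_uses.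
by subst e; have /andP [W1 W2] := detour_uses_ab W; split; exists (detour v p).
Qed.

Lemma shortcut_filter_walk v u q : v != w -> u != w -> walk G v q u -> uniq (v :: q) ->
  [/\ walk shortcut v (filter (predC1 w) q) u,
      uniq (v :: filter (predC1 w) q),
      (forall e, w \notin e -> walk_uses e v q -> walk_uses e v (filter (predC1 w) q)) &
      (w \in q -> walk_uses [set a; b] v (filter (predC1 w) q))].
Proof.
move=> nvw nuw /andP [P /eqP L] U.
have [P' L' W1 W2] := shortcut_filter_path P U nvw (ltac:(by rewrite L)).
split => //; first by rewrite /walk P' L' L eqxx.
by have := filter_uniq (predC1 w) U; rewrite /= nvw.
Qed.

Section Pairs.
Variables (r : nat) (pairs : 'I_r -> V * V).
Hypothesis w_nonterminal : w \notin terminals pairs.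

Lemma ends_neq_w i : (pairs i).1 != w /\ (pairs i).2 != w.
Proof. by have [] := notin_terminals w_nonterminal i; rewrite !(eq_sym w). Qed.

Lemma shortcut_r_forest : r_forest (complete_edges V) pairs G ->
  r_forest (complete_edges V) pairs shortcut.
Proof.
case=> HS HF conn Hon.
split.
- apply/subsetP => e; rewrite !inE => /orP [/eqP ->|/and3P [_ _ Ge]].
    by rewrite cards2 nab.
  by move/subsetP: HS => /(_ e Ge); rewrite inE.
- exact: shortcut_forest.
- move=> i; have [nv nu] := ends_neq_w i.
  have [p /andP [P /eqP]] := conn i; case: (shortenP P) => q P' U' _ L.
  have W : walk G (pairs i).1 q (pairs i).2 by rewrite /walk P' L eqxx.
  by have [W' _ _ _] := shortcut_filter_walk nv nu W U'; eexists; apply: W'.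
- move=> e He; case: (eqVneq e [set a; b]) => [->|ne].
    have [i [q [W U Wa]]] := Hon _ Gwa; have [nv nu] := ends_neq_w i.
    have [W' U' _ W2] := shortcut_filter_walk nv nu W U.
    exists i, (filter (predC1 w) q); split => //; apply: W2.
    by have := mem_walk_uses Wa (set21 w a); rewrite inE eq_sym (negbTE nv).
  have [i [q [W U We]]] := Hon _ (shortcut_old He ne); have [nv nu] := ends_neq_w i.
  have [W' U' W1 _] := shortcut_filter_walk nv nu W U.
  by exists i, (filter (predC1 w) q); split => //; apply: W1 => //; apply: notin_shortcut_w.
Qed.

Section Cost.
Variables (R : realFieldType) (c : {set V} -> R) (Phi : ('I_r -> R) -> R).
Local Open Scope ring_scope.
Hypotheses (HF : is_forest G)
  (c_wa : 0 <= c [set w; a]) (c_wb : 0 <= c [set w; b])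
  (c_tri : c [set a; b] <= c [set w; a] + c [set w; b])
  (Phi_mono : forall t t' : 'I_r -> R, (forall i, t i <= t' i) -> Phi t <= Phi t').

Lemma conn_time_shortcut (s1 s2 s3 : seq {set V}) (x y : {set V}) v u :
  uniq (s1 ++ x :: s2 ++ y :: s3) -> [set a; b] \notin s1 ++ x :: s2 ++ y :: s3 ->
  0 <= c x -> c [set a; b] <= c x + c y -> y \in [set [set w; a]; [set w; b]] ->
  v != w ->
  conn_time shortcut c (s1 ++ s2 ++ [set a; b] :: s3) v u <=
  conn_time G c (s1 ++ x :: s2 ++ y :: s3) v u.
Proof.
move=> U ab_new cx_ge0 cz_le y_w nv.
rewrite {1}/conn_time big_seq_cond; apply: bigmax_le => [|e /andP [e_new /asboolP Pe]].
  exact: bigmax_ge_id.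
have [Pold Pab] := on_path_shortcut nv Pe.
have [Eab|ne] := eqVneq e [set a; b].
  subst e; apply: le_trans (completion_shortcut_new U ab_new cz_le) _.
  apply: le_bigmax_seq; first by rewrite !(mem_cat, inE) eqxx !orbT.
  by apply/asboolP; have [] := Pab erefl; move: y_w; rewrite in_set2 => /orP [] /eqP ->.
apply: le_trans (completion_shortcut_old U cx_ge0 cz_le e_new ne) _.
apply: le_bigmax_seq; last by apply/asboolP; apply: Pold.
by move: e_new; rewrite !(mem_cat, inE) (negbTE ne) /= => /or3P [] ->; rewrite ?orbT.
Qed.

Lemma shortcut_obj : obj pairs Phi shortcut c <= obj pairs Phi G c.
Proof.
have [s Ps ->] := obj_attained pairs Phi G c.
have Us : uniq s by rewrite (perm_uniq Ps) enum_uniq.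
have mem_s e : (e \in s) = (e \in G) by rewrite (perm_mem Ps) mem_enum.
have ab_new : [set a; b] \notin s by rewrite mem_s ab_notin_G.
have [s1 [s2 [s3 Es]]] : exists (s1 s2 s3 : seq {set V}) (x y : {set V}),
    [/\ s = s1 ++ x :: s2 ++ y :: s3, [set x; y] = [set [set w; a]; [set w; b]],
        0 <= c x & c [set a; b] <= c x + c y].
  have [swa swb] : [set w; a] \in s /\ [set w; b] \in s by rewrite !mem_s.
  have [s1 [s2 [s3 []]] ->] := split_two swa swb neq_wa_wb.
    by exists s1, s2, s3, [set w; a], [set w; b].
  by exists s1, s2, s3, [set w; b], [set w; a]; split; rewrite // 1?addrC // setUC.
case: Es => x [y [Es Exy cx_ge0 cz_le]]; subst s.
have y_w : y \in [set [set w; a]; [set w; b]] by rewrite -Exy set22.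
set s' := s1 ++ s2 ++ [set a; b] :: s3.
have Ps' : perm_eq s' (enum shortcut).
  apply: uniq_perm; rewrite ?enum_uniq //.
    move: Us; rewrite /s' (perm_uniq (perm_cat_cons _ _ _ _)) uniq_cat_cons2 /=.
    by case/and4P => _ _ _ ->; move: ab_new; rewrite !(mem_cat, inE) !negb_or => /and5P [-> _ -> _ ->].
  move=> e; rewrite mem_enum /s' (perm_mem (perm_cat_cons _ _ _ _)) !inE -mem_s.
  case: (eqVneq e [set a; b]) => //= _.
  have [nxr nyr] : x \notin s1 ++ s2 ++ s3 /\ y \notin s1 ++ s2 ++ s3.
    by move: Us; rewrite uniq_cat_cons2 => /and4P [].
  rewrite (perm_mem (perm_cat_cons2 _ _ _ _ _)) !in_cons andbA.
  have -> : (e != [set w; b]) && (e != [set w; a]) = ~~ ((e == x) || (e == y)).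
    by rewrite -in_set2 Exy in_set2 negb_or andbC.
  have [->|nex] := eqVneq e x; first by rewrite (negbTE nxr).
  have [->|ney] := eqVneq e y; first by rewrite orbT (negbTE nyr).
  by [].
apply: le_trans (obj_le pairs Phi c Ps') _; apply: Phi_mono => i.
by apply: conn_time_shortcut => //; have [] := ends_neq_w i.
Qed.

End Cost.
End Pairs.
End Shortcut.

Section MetricClosure.
Variables (V : finType) (R : realFieldType) (E : {set {set V}}) (c chat : {set V} -> R).
Local Open Scope ring_scope.
Hypotheses (E_simple : simple_graph E) (c_gt0 : forall e, e \in E -> 0 < c e)
  (chat_sp : forall x y : V, x != y -> is_sp_dist E c x y (chat [set x; y])).

Lemma walk_len_ge0 x p : path (adj E) x p -> 0 <= walk_len c x p.
Proof.
elim: p x => [|y p IH] x /=; first by rewrite /walk_len big_nil.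
case/andP => A P; rewrite /walk_len /= big_cons.
by apply: addr_ge0; [apply: ltW; apply: c_gt0 | apply: IH].
Qed.

Lemma walk_len_cat x p q :
  walk_len c x (p ++ q) = walk_len c x p + walk_len c (last x p) q.
Proof.
elim: p x => [|y p IH] x /=; first by rewrite /walk_len big_nil add0r.
by rewrite /walk_len /= !big_cons -addrA; congr (_ + _); apply: IH.
Qed.

Lemma closure_le_length e : e \in E -> chat e <= c e.
Proof.
move=> Ee; have /cards2P [x [y [nxy exy]]] : #|e| == 2 by rewrite E_simple.
subst e; have [_ sp_min] := chat_sp nxy.
have W : walk E x [:: y] y by rewrite /walk /= eqxx !andbT.
by have := sp_min _ W; rewrite /walk_len /= big_cons big_nil addr0.
Qed.

Lemma closure_ge0 x y : x != y -> 0 <= chat [set x; y].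
Proof. by move=> nxy; have [[p [/andP [P _] <-]] _] := chat_sp nxy; apply: walk_len_ge0. Qed.

Lemma closure_triangle x y z : x != y -> y != z -> x != z ->
  chat [set x; z] <= chat [set x; y] + chat [set y; z].
Proof.
move=> nxy nyz nxz.
have [[p1 [/andP [P1 /eqP L1] <-]] _] := chat_sp nxy.
have [[p2 [/andP [P2 /eqP L2] <-]] _] := chat_sp nyz.
have [_ sp_min] := chat_sp nxz.
have W : walk E x (p1 ++ p2) z by rewrite /walk cat_path P1 L1 P2 last_cat L1 L2 eqxx.
by have := sp_min _ W; rewrite walk_len_cat L1.
Qed.

End MetricClosure.

Section Reduction.
Variables (V : finType) (R : realFieldType) (chat : {set V} -> R)
  (r : nat) (pairs : 'I_r -> V * V) (Phi : ('I_r -> R) -> R).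
Local Open Scope ring_scope.
Hypotheses (chat_ge0 : forall x y : V, x != y -> 0 <= chat [set x; y])
  (chat_tri : forall x y z : V, x != y -> y != z -> x != z ->
     chat [set x; z] <= chat [set x; y] + chat [set y; z])
  (Phi_mono : forall t t' : 'I_r -> R, (forall i, t i <= t' i) -> Phi t <= Phi t').

Definition closure_r_forest G := r_forest (complete_edges V) pairs G.

Lemma deg2_shortcut G w : closure_r_forest G ->
  w \in nonterminals pairs G -> deg G w = 2 ->
  exists G', [/\ closure_r_forest G', obj pairs Phi G' chat <= obj pairs Phi G chat
                & (#|G'| < #|G|)%N].
Proof.
move=> HR Nw deg_w; have [HS HF _ _] := HR.
have w_nt : w \notin terminals pairs by move: Nw; rewrite inE => /andP [].
have HG := complete_edges_simple HS.
have [a [b [nab Gwa Gwb deg_wab]]] := deg2_neighbours HG deg_w.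
have [nwa nwb] := (adj_neq HG Gwa, adj_neq HG Gwb).
have tri : chat [set a; b] <= chat [set w; a] + chat [set w; b].
  by have := chat_tri (ltac:(by rewrite eq_sym) : a != w) nwb nab; rewrite [[set a; w]]setUC.
exists (shortcut G w a b); split.
- exact: shortcut_r_forest.
- by apply: shortcut_obj; rewrite ?chat_ge0.
- exact: card_shortcut.
Qed.

Lemma reduce_nonterminals G : closure_r_forest G ->
  exists Fhat, [/\ closure_r_forest Fhat, obj pairs Phi Fhat chat <= obj pairs Phi G chat
                  & (#|nonterminals pairs Fhat| <= 2 * r - 2)%N].
Proof.
have [n] := ubnP #|G|; elim: n G => // n IH G /ltnSE HGn HR.
have [/exists_inP [w Nw /eqP deg_w]|/exists_inPn no_deg2] :=
  boolP [exists w in nonterminals pairs G, deg G w == 2]; last first.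
  by exists G; split => //; apply: card_nonterminals.
have [G' [HR' obj_le' card_lt]] := deg2_shortcut HR Nw deg_w.
have [Fhat [HRF objF cardF]] := IH G' (leq_trans card_lt HGn) HR'.
by exists Fhat; split => //; apply: le_trans obj_le'.
Qed.

End Reduction.

Unset Implicit Arguments.
Local Open Scope ring_scope.

Theorem lemma3 (R : realFieldType) (V : finType)
  (E : {set {set V}}) (c : {set V} -> R)
  (r : nat) (pairs : 'I_r -> V * V) (Phi : ('I_r -> R) -> R)
  (chat : {set V} -> R) :
  (forall e, e \in E -> #|e| = 2)%N ->
  (forall e, e \in E -> 0 < c e) ->
  connected E ->
  (2 <= r)%N ->
  (forall t t' : 'I_r -> R, (forall i, t i <= t' i) -> Phi t <= Phi t') ->
  (forall x y : V, x != y -> is_sp_dist E c x y (chat [set x; y])) ->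
  forall F : {set {set V}}, r_forest E pairs F ->
  exists Fhat : {set {set V}},
    [/\ r_forest (complete_edges V) pairs Fhat,
        obj pairs Phi Fhat chat <= obj pairs Phi F c &
        (#|nonterminals pairs Fhat| <= 2 * r - 2)%N].
Proof.
move=> E_simple c_gt0 _ _ Phi_mono chat_sp F [FE HF conn Hon].
have F_closure : r_forest (complete_edges V) pairs F.
  by split=> //; apply/subsetP => e /(subsetP FE) Ee; rewrite inE E_simple.
have [Fhat [HRF obj_le cardF]] := reduce_nonterminals (closure_ge0 c_gt0 chat_sp)
  (closure_triangle chat_sp) Phi_mono F_closure.
exists Fhat; split => //; apply: le_trans obj_le _.
apply: obj_le_lengths => // e /(subsetP FE); exact: closure_le_length.
Qed.
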